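(* Let $q\ge2$ and let $f\colon\mathbb{N}_0\to\mathbb{U}$ be a $q$-multiplicative sequence such that for every $\alpha\in\mathbb{R}$, $$\frac1N\sum_{n=0}^{N-1}f(n)e(n\alpha)\to0\quad\text{as }N\to\infty.$$ Then the convergence is uniform in $\alpha$: $$\sup_{\alpha\in\mathbb{R}}\Big|\frac1N\sum_{n=0}^{N-1}f(n)e(n\alpha)\Big|\to0\quad\text{as }N\to\infty.$$
   Context: $\mathbb{N}_0=\{0,1,2,\dots\}$, $\mathbb{U}=\{z\in\mathbb{C}:|z|=1\}$, $e(t)=e^{2\pi i t}$. A sequence $f\colon\mathbb{N}_0\to\mathbb{U}$ is $q$-multiplicative if for all integers $t,m,n\ge 0$ with $m<q^t$ and $q^t\mid n$ one has $f(m+n)=f(m)f(n)$. *)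

From Stdlib Require Import Reals.
From Coquelicot Require Import Coquelicot.
Open Scope R_scope.

Definition e (t : R) : C := (cos (2 * PI * t), sin (2 * PI * t)).

Definition q_multiplicative (q : nat) (f : nat -> C) : Prop :=
  forall t m n : nat, (m < q ^ t)%nat -> Nat.divide (q ^ t) n ->
    f (m + n)%nat = Cmult (f m) (f n).

Fixpoint csum (g : nat -> C) (N : nat) : C :=
  match N with
  | O => RtoC 0
  | S N' => Cplus (csum g N') (g N')
  end.

Definition avg (f : nat -> C) (N : nat) (alpha : R) : C :=
  Cmult (RtoC (/ INR N)) (csum (fun n => Cmult (f n) (e (INR n * alpha))) N).

From Stdlib Require Import Reals Lra Lia ZArith Classical ClassicalEpsilon.
From Coquelicot Require Import Coquelicot.
Open Scope R_scope.

(* Write S_N(a) for the sum of f(n) e(n a) over n < N.  Cutting [0, Q q^k) into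
   blocks of length q^k, q-multiplicativity turns the block starting at m q^k into
   f(m q^k) e(m q^k a) S_{q^k}(a), so |S_{Q q^k}| <= Q |S_{q^k}|.  Hence the averages |S_{q^k}(a)| / q^k
   are non-increasing in k; they are continuous and 1-periodic in a and tend to 0
   pointwise, so by Dini's theorem they tend to 0 uniformly.  The same block
   decomposition of N = Q q^k + r gives |S_N| / N <= |S_{q^k}| / q^k + q^k / N. *)

Lemma csum_ext (g h : nat -> C) (N : nat) :
  (forall n, (n < N)%nat -> g n = h n) -> csum g N = csum h N.
Proof.
  induction N as [|N IH]; intros Hgh; simpl; [reflexivity|].
  rewrite IH by (intros; apply Hgh; lia). rewrite Hgh by lia. reflexivity.
Qed.

Lemma csum_add (g : nat -> C) (M N : nat) :
  csum g (M + N) = (csum g M + csum (fun n => g (M + n)%nat) N)%C.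
Proof.
  induction N as [|N IH]; simpl.
  - rewrite Nat.add_0_r; ring.
  - rewrite Nat.add_succ_r; simpl; rewrite IH; ring.
Qed.

Lemma csum_scal (c : C) (g : nat -> C) (N : nat) :
  csum (fun n => c * g n)%C N = (c * csum g N)%C.
Proof. induction N as [|N IH]; simpl; [|rewrite IH]; ring. Qed.

Lemma csum_sub (g h : nat -> C) (N : nat) :
  csum (fun n => g n - h n)%C N = (csum g N - csum h N)%C.
Proof. induction N as [|N IH]; simpl; [|rewrite IH]; ring. Qed.

Lemma Cmod_csum_le (g : nat -> C) (N : nat) (c : R) :
  (forall n, (n < N)%nat -> Cmod (g n) <= c) -> Cmod (csum g N) <= INR N * c.
Proof.
  induction N as [|N IH]; intros Hg; simpl csum.
  - rewrite Cmod_0; simpl; lra.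
  - rewrite S_INR.
    assert (Cmod (csum g N) <= INR N * c) by (apply IH; intros; apply Hg; lia).
    assert (Cmod (g N) <= c) by (apply Hg; lia).
    pose proof (Cmod_triangle (csum g N) (g N)); lra.
Qed.

Lemma Rabs_Cmod_sub_le (x y : C) : Rabs (Cmod x - Cmod y) <= Cmod (x - y)%C.
Proof.
  pose proof (Cmod_triangle (x - y)%C y). pose proof (Cmod_triangle (y - x)%C x).
  replace (x - y + y)%C with x in * by ring. replace (y - x + x)%C with y in * by ring.
  replace (y - x)%C with (- (x - y))%C in * by ring. rewrite Cmod_opp in *.
  apply Rabs_le; lra.
Qed.

Lemma Rabs_sin_le (u : R) : Rabs (sin u) <= Rabs u.
Proof.
  assert (Hpos : forall v, 0 <= v -> Rabs (sin v) <= v).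
  { intros v Hv. pose proof (SIN_bound v). pose proof PI2_1.
    destruct (Rle_lt_dec 1 v) as [H1|H1]; [apply Rabs_le; lra|].
    destruct (Req_dec v 0) as [->|Hv0]; [rewrite sin_0, Rabs_R0; lra|].
    pose proof (sin_lt_x v ltac:(lra)). pose proof (sin_ge_0 v Hv ltac:(lra)).
    rewrite Rabs_right; lra. }
  destruct (Rle_lt_dec 0 u) as [Hu|Hu].
  - rewrite (Rabs_right u) by lra; auto.
  - rewrite (Rabs_left u), <- (Ropp_involutive u) at 1 by lra.
    rewrite sin_neg, Rabs_Ropp. apply Hpos; lra.
Qed.

Lemma e_add (x y : R) : e (x + y) = (e x * e y)%C.
Proof.
  unfold e, Cmult; simpl.
  replace (2 * PI * (x + y)) with (2 * PI * x + 2 * PI * y) by ring.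
  rewrite cos_plus, sin_plus; f_equal; ring.
Qed.

Lemma Cmod_e (x : R) : Cmod (e x) = 1.
Proof.
  unfold Cmod, e; cbn [fst snd]. rewrite <- sqrt_1. f_equal.
  rewrite <- (sin2_cos2 (2 * PI * x)). unfold Rsqr. ring.
Qed.

Lemma Cmod_e_sub_1 (t : R) : Cmod (e t - 1)%C <= 2 * PI * Rabs t.
Proof.
  assert (Hsq : Cmod (e t - 1)%C ^ 2 = 4 * sin (PI * t) ^ 2).
  { rewrite Cmod2_alt. unfold e; simpl.
    pose proof (sin2_cos2 (2 * (PI * t))) as H. unfold Rsqr in H.
    replace (2 * PI * t) with (2 * (PI * t)) by ring.
    rewrite cos_2a_sin in *. nra. }
  apply Rsqr_incr_0_var.
  - pose proof (Rsqr_le_abs_1 _ _ (Rabs_sin_le (PI * t))) as Hsin.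
    pose proof (pow2_abs t). unfold Rsqr in *. nra.
  - pose proof PI_RGT_0. pose proof (Rabs_pos t). nra.
Qed.

Lemma Cmod_e_sub (x y : R) : Cmod (e x - e y)%C <= 2 * PI * Rabs (x - y).
Proof.
  assert (Hx : e x = (e y * e (x - y))%C) by (rewrite <- e_add; f_equal; ring).
  replace (e x - e y)%C with (e y * (e (x - y) - 1))%C by (rewrite Hx; ring).
  rewrite Cmod_mult, Cmod_e, Rmult_1_l. apply Cmod_e_sub_1.
Qed.

Lemma e_add_INR (x : R) (k : nat) : e (x + INR k) = e x.
Proof.
  unfold e. replace (2 * PI * (x + INR k)) with (2 * PI * x + 2 * INR k * PI) by ring.
  now rewrite cos_period, sin_period.
Qed.

Lemma e_add_IZR (x : R) (z : Z) : e (x + IZR z) = e x.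
Proof.
  destruct (Z_le_gt_dec 0 z) as [Hz|Hz].
  - rewrite <- (Z2Nat.id z Hz), <- INR_IZR_INZ. apply e_add_INR.
  - rewrite <- (e_add_INR (x + IZR z) (Z.to_nat (- z))), INR_IZR_INZ, Z2Nat.id, opp_IZR
      by lia.
    f_equal; ring.
Qed.

Lemma lipschitz_continuity_pt (h : R -> R) (L x : R) :
  (forall y, Rabs (h y - h x) <= L * Rabs (y - x)) -> continuity_pt h x.
Proof.
  intros Hlip. apply continuity_pt_locally. intros eps.
  assert (Hd : 0 < eps / (Rabs L + 1))
    by (apply Rdiv_lt_0_compat; [apply cond_pos | pose proof (Rabs_pos L); lra]).
  exists (mkposreal _ Hd). intros y Hy. change (Rabs (y - x) < eps / (Rabs L + 1)) in Hy.
  assert (HdL : eps / (Rabs L + 1) * (Rabs L + 1) = eps)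
    by (field; pose proof (Rabs_pos L); lra).
  eapply Rle_lt_trans; [apply Hlip|].
  pose proof (RRle_abs L). pose proof (Rabs_pos L). pose proof (Rabs_pos (y - x)).
  nra.
Qed.

Lemma dini_unit_interval (g : nat -> R -> R) :
  (forall k x, g (S k) x <= g k x) ->
  (forall k x, continuity_pt (g k) x) ->
  (forall x, is_lim_seq (fun k => g k x) 0) ->
  forall eps, 0 < eps -> exists K, forall x, 0 <= x <= 1 -> g K x <= eps.
Proof.
  intros Hdecr Hcont Hlim eps Heps. apply NNPP. intros Hnot.
  assert (Hbad : forall K, exists x, 0 <= x <= 1 /\ eps < g K x).
  { intros K. apply NNPP. intros HK. apply Hnot. exists K. intros x Hx.
    apply Rnot_lt_le. intros Hgt. apply HK. now exists x. }
  (* A cluster point l of the bad points x K is impossible: g J < eps near l for some J,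
     and g p <= g J for p >= J. *)
  destruct (choice _ Hbad) as [x Hx].
  destruct (Bolzano_Weierstrass x _ (compact_P3 0 1) (fun K => proj1 (Hx K))) as [l Hl].
  assert (Heps2 : 0 < eps / 2) by lra.
  destruct (proj2 (is_lim_seq_spec _ _) (Hlim l) (mkposreal _ Heps2)) as [J HJ].
  specialize (HJ J (le_n J)); simpl in HJ.
  destruct (proj1 (continuity_pt_locally _ _) (Hcont J l) (mkposreal _ Heps2))
    as [delta Hdelta]; simpl in Hdelta.
  destruct (Hl (disc l delta) J) as [p [HJp Hp]]; [now exists delta|].
  specialize (Hdelta (x p) Hp).
  pose proof (decreasing_prop (fun k => g k (x p)) J p (fun k => Hdecr k (x p)) HJp).
  pose proof (proj2 (Hx p)).
  apply Rabs_lt_between' in Hdelta. rewrite Rminus_0_r in HJ. apply Rabs_lt_between in HJ.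
  simpl in *. lra.
Qed.

Lemma Lub_Rbar_image_le (h : R -> R) (B : R) :
  (forall x, 0 <= h x <= B) -> 0 <= real (Lub_Rbar (fun y => exists x, y = h x)) <= B.
Proof.
  intros Hh. destruct (Lub_Rbar_correct (fun y => exists x, y = h x)) as [Hub Hleast].
  assert (HB : is_ub_Rbar (fun y => exists x, y = h x) B)
    by (intros y [x ->]; apply Hh).
  specialize (Hleast B HB).
  specialize (Hub (h 0) (ex_intro _ 0 eq_refl)).
  pose proof (Hh 0).
  destruct (Lub_Rbar _); simpl in *; try contradiction; lra.
Qed.

Lemma is_lim_seq_div_INR (c : R) : is_lim_seq (fun N => c / INR N) 0.
Proof.
  replace (Finite 0) with (Rbar_mult c (Rbar_inv p_infty)) by (simpl; f_equal; ring).
  apply is_lim_seq_scal_l, is_lim_seq_inv; [apply is_lim_seq_INR | discriminate].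
Qed.

Section Exponential_sums.

Variable f : nat -> C.
Hypothesis f_bounded : forall n, Cmod (f n) <= 1.

Definition expsum (N : nat) (a : R) : C := csum (fun n => f n * e (INR n * a))%C N.

Lemma Cmod_avg (N : nat) (a : R) : Cmod (avg f N a) = Cmod (expsum N a) / INR N.
Proof.
  unfold avg. rewrite Cmod_mult, Cmod_R, Rabs_right; [unfold Rdiv, expsum; ring|].
  destruct N as [|N]; [rewrite INR_0, Rinv_0; lra|].
  apply Rle_ge, Rlt_le, Rinv_0_lt_compat, lt_0_INR; lia.
Qed.

Lemma Cmod_expsum_le (N : nat) (a : R) : Cmod (expsum N a) <= INR N.
Proof.
  rewrite <- (Rmult_1_r (INR N)). apply Cmod_csum_le. intros n _.
  rewrite Cmod_mult, Cmod_e, Rmult_1_r. apply f_bounded.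
Qed.

Lemma avg_add_IZR (N : nat) (a : R) (z : Z) : avg f N (a + IZR z) = avg f N a.
Proof.
  unfold avg. f_equal. apply csum_ext. intros n _. f_equal.
  rewrite Rmult_plus_distr_l, INR_IZR_INZ, <- mult_IZR. apply e_add_IZR.
Qed.

Lemma Cmod_expsum_sub (N : nat) (a b : R) :
  Cmod (expsum N a - expsum N b)%C <= INR N * (2 * PI * INR N * Rabs (a - b)).
Proof.
  unfold expsum. rewrite <- csum_sub. apply Cmod_csum_le. intros n Hn.
  replace (f n * e (INR n * a) - f n * e (INR n * b))%C
    with (f n * (e (INR n * a) - e (INR n * b)))%C by ring.
  rewrite Cmod_mult.
  pose proof (Cmod_e_sub (INR n * a) (INR n * b)) as He.
  rewrite <- Rmult_minus_distr_l, Rabs_mult, (Rabs_right (INR n)) in He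
    by (apply Rle_ge, pos_INR).
  assert (INR n <= INR N) by (apply le_INR; lia).
  pose proof PI_RGT_0. pose proof (Rabs_pos (a - b)).
  apply Rle_trans with (1 * (2 * PI * (INR n * Rabs (a - b)))).
  - apply Rmult_le_compat; auto using Cmod_ge_0.
  - rewrite Rmult_1_l, <- Rmult_assoc. apply Rmult_le_compat_r; [|apply Rmult_le_compat_l]; lra.
Qed.

Lemma continuity_Cmod_avg (N : nat) (a : R) : continuity_pt (fun b => Cmod (avg f N b)) a.
Proof.
  apply (lipschitz_continuity_pt _ (2 * PI * INR N)). intros b. rewrite !Cmod_avg.
  destruct N as [|N]; [rewrite INR_0; unfold Rdiv; rewrite Rinv_0, !Rmult_0_r, Rminus_0_r,
    Rabs_R0; pose proof (Rabs_pos (b - a)); pose proof PI_RGT_0; nra|].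
  assert (HN : 0 < INR (S N)) by (apply lt_0_INR; lia).
  unfold Rdiv. rewrite <- Rmult_minus_distr_r, Rabs_mult, (Rabs_right (/ _))
    by (apply Rle_ge, Rlt_le, Rinv_0_lt_compat, HN).
  apply (Rmult_le_reg_r (INR (S N))); [exact HN|].
  rewrite Rmult_assoc, Rinv_l, Rmult_1_r by lra.
  eapply Rle_trans; [apply Rabs_Cmod_sub_le|].
  eapply Rle_trans; [apply Cmod_expsum_sub|]. lra.
Qed.

Variable q : nat.
Hypothesis q_gt1 : (1 < q)%nat.
Hypothesis f_mult : q_multiplicative q f.

Lemma INR_pow_pos (k : nat) : 0 < INR (q ^ k).
Proof. apply lt_0_INR, Nat.neq_0_lt_0, Nat.pow_nonzero. lia. Qed.

Lemma expsum_block (k Q r : nat) (a : R) : (r <= q ^ k)%nat ->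
  expsum (Q * q ^ k + r) a
  = (expsum (Q * q ^ k) a + f (Q * q ^ k) * e (INR (Q * q ^ k) * a) * expsum r a)%C.
Proof.
  intros Hr. unfold expsum at 1. rewrite csum_add. f_equal.
  unfold expsum. rewrite <- csum_scal. apply csum_ext. intros m Hm.
  rewrite Nat.add_comm, (f_mult k m (Q * q ^ k)%nat) by (lia || now exists Q).
  rewrite plus_INR, Rmult_plus_distr_r, e_add. ring.
Qed.

Lemma Cmod_expsum_mul_pow (k Q : nat) (a : R) :
  Cmod (expsum (Q * q ^ k) a) <= INR Q * Cmod (expsum (q ^ k) a).
Proof.
  induction Q as [|Q IH].
  - rewrite INR_0, Rmult_0_l. unfold expsum; simpl. rewrite Cmod_0. lra.
  - rewrite Nat.mul_succ_l, expsum_block, S_INR by lia.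
    eapply Rle_trans; [apply Cmod_triangle|].
    rewrite !Cmod_mult, Cmod_e, Rmult_1_r.
    pose proof (f_bounded (Q * q ^ k)). pose proof (Cmod_ge_0 (expsum (q ^ k) a)).
    pose proof (Cmod_ge_0 (f (Q * q ^ k))). nra.
Qed.

Lemma Cmod_avg_pow_succ (k : nat) (a : R) :
  Cmod (avg f (q ^ S k) a) <= Cmod (avg f (q ^ k) a).
Proof.
  rewrite !Cmod_avg, Nat.pow_succ_r', mult_INR.
  pose proof (INR_pow_pos k). assert (0 < INR q) by (apply lt_0_INR; lia).
  unfold Rdiv. eapply Rle_trans.
  - apply Rmult_le_compat_r; [apply Rlt_le, Rinv_0_lt_compat; nra|].
    apply Cmod_expsum_mul_pow.
  - right. field. lra.
Qed.

Lemma Cmod_expsum_le_pow (k N : nat) (a : R) :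
  Cmod (expsum N a) <= INR N * (Cmod (expsum (q ^ k) a) / INR (q ^ k)) + INR (q ^ k).
Proof.
  set (M := (q ^ k)%nat). pose proof (INR_pow_pos k) as HM. fold M in HM.
  assert (HM0 : M <> 0%nat) by (apply Nat.pow_nonzero; lia).
  assert (Hr : (N mod M < M)%nat) by (apply Nat.mod_upper_bound; lia).
  assert (HQ : INR (N / M) * INR M <= INR N).
  { rewrite <- mult_INR. apply le_INR. rewrite (Nat.div_mod_eq N M) at 2. lia. }
  rewrite (Nat.div_mod_eq N M), Nat.mul_comm at 1. unfold M. rewrite expsum_block by exact (Nat.lt_le_incl _ _ Hr).
  fold M. eapply Rle_trans; [apply Cmod_triangle|].
  rewrite !Cmod_mult, Cmod_e, Rmult_1_r.
  pose proof (Cmod_expsum_mul_pow k (N / M) a) as Hblocks. fold M in Hblocks.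
  pose proof (Cmod_expsum_le (N mod M) a) as Hrest.
  assert (INR (N mod M) <= INR M) by (apply le_INR; lia).
  pose proof (f_bounded (N / M * M)). pose proof (Cmod_ge_0 (f (N / M * M))).
  assert (Havg : 0 <= Cmod (expsum M a) / INR M)
    by (apply Rdiv_le_0_compat; [apply Cmod_ge_0 | exact HM]).
  replace (Cmod (expsum M a)) with (INR M * (Cmod (expsum M a) / INR M)) in Hblocks
    by (field; lra).
  nra.
Qed.

Lemma Cmod_avg_le_pow (k N : nat) (a : R) :
  Cmod (avg f N a) <= Cmod (avg f (q ^ k) a) + INR (q ^ k) / INR N.
Proof.
  rewrite !Cmod_avg. pose proof (INR_pow_pos k).
  assert (0 <= Cmod (expsum (q ^ k) a) / INR (q ^ k))
    by (apply Rdiv_le_0_compat; [apply Cmod_ge_0 | assumption]).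
  destruct N as [|N].
  - rewrite INR_0. unfold Rdiv at 1 3. rewrite Rinv_0. lra.
  - assert (0 < INR (S N)) by (apply lt_0_INR; lia).
    apply (Rmult_le_reg_r (INR (S N))); [assumption|].
    pose proof (Cmod_expsum_le_pow k (S N) a).
    replace (Cmod (expsum (S N) a) / INR (S N) * INR (S N)) with (Cmod (expsum (S N) a))
      by (field; lra).
    replace ((Cmod (expsum (q ^ k) a) / INR (q ^ k) + INR (q ^ k) / INR (S N)) * INR (S N))
      with (INR (S N) * (Cmod (expsum (q ^ k) a) / INR (q ^ k)) + INR (q ^ k))
      by (field; lra).
    assumption.
Qed.

Lemma avg_pow_uniformly_small :
  (forall a, is_lim_seq (fun N => Cmod (avg f N a)) 0) ->
  forall eps, 0 < eps -> exists K, forall a, Cmod (avg f (q ^ K) a) <= eps.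
Proof.
  intros Hlim eps Heps.
  assert (Hpow : forall a, is_lim_seq (fun k => Cmod (avg f (q ^ k) a)) 0).
  { intros a. apply (is_lim_seq_subseq (fun N => Cmod (avg f N a))); [|apply Hlim].
    apply eventually_subseq. intros k. apply Nat.pow_lt_mono_r; lia. }
  destruct (dini_unit_interval (fun k a => Cmod (avg f (q ^ k) a)) Cmod_avg_pow_succ
    (fun k => continuity_Cmod_avg (q ^ k)) Hpow eps Heps) as [K HK].
  exists K. intros a.
  rewrite <- (avg_add_IZR (q ^ K) a (- Int_part a)). apply HK.
  rewrite opp_IZR. pose proof (base_Int_part a). lra.
Qed.

End Exponential_sums.

Theorem lemma2p3 (q : nat) (f : nat -> C) :
  (2 <= q)%nat ->
  (forall n, Cmod (f n) = 1) ->
  q_multiplicative q f ->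
  (forall alpha : R, is_lim_seq (fun N => Cmod (avg f N alpha)) 0) ->
  is_lim_seq
    (fun N => real (Lub_Rbar (fun x => exists alpha : R, x = Cmod (avg f N alpha))))
    0.
Proof.
  intros hq hf hm hlim.
  assert (hf1 : forall n, Cmod (f n) <= 1) by (intros n; rewrite hf; lra).
  apply is_lim_seq_spec. intros eps. pose proof (cond_pos eps) as Heps.
  destruct (avg_pow_uniformly_small f hf1 q hq hm hlim (eps / 2)) as [K HK]; [lra|].
  destruct (proj2 (is_lim_seq_spec _ _) (is_lim_seq_div_INR (INR (q ^ K)))
    (mkposreal (eps / 2) ltac:(lra))) as [N0 HN0].
  exists N0. intros N HN. specialize (HN0 N HN). simpl in HN0.
  rewrite Rminus_0_r in HN0. apply Rabs_lt_between in HN0.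
  destruct (Lub_Rbar_image_le (fun a => Cmod (avg f N a)) (eps / 2 + INR (q ^ K) / INR N))
    as [Hsup_ge Hsup_le].
  - intros a. split; [apply Cmod_ge_0|].
    pose proof (Cmod_avg_le_pow f hf1 q hq hm K N a). pose proof (HK a). lra.
  - rewrite Rminus_0_r, Rabs_right by lra. lra.
Qed.
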